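(* Let $A$ be a finite abelian group of even order and $H$ a subgroup of $A$ such that every element of $H$ is a square in $A$. Then $H$ is a subgroup perfect code of $A$ if and only if $H=\{2a:a\in A\}$.
   Context: $A$ is written additively with identity $0$. An element $x$ of $A$ is a square if $x=2y$ for some $y\in A$; a subset is square-free if it contains no squares. For a square-free $T\subseteq A$, the Cayley sum graph $\mathrm{CayS}(A,T)$ is the simple graph with vertex set $A$ in which distinct $x,y$ are adjacent iff $x+y\in T$. A subset $C$ of the vertex set of a graph is a perfect code if every vertex is at distance at most one from exactly one vertex of $C$. A subgroup $H$ of $A$ is a subgroup perfect code of $A$ if $H$ is a perfect code of $\mathrm{CayS}(A,T)$ for some square-free $T\subseteq A$ (the empty set allowed). *)

From HB Require Import structures.
From mathcomp Require Import all_boot all_order all_algebra.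
Set Implicit Arguments. Unset Strict Implicit. Unset Printing Implicit Defensive.
Import GRing.Theory.
Local Open Scope ring_scope.

(* A finite abelian group A is a finZmodType (written additively, identity 0). *)

Definition is_square (A : finZmodType) (x : A) : bool := [exists y : A, x == y *+ 2].

Definition square_free (A : finZmodType) (T : {set A}) : Prop :=
  forall x, x \in T -> ~~ is_square x.

Definition is_subgroup (A : finZmodType) (H : {set A}) : Prop :=
  0 \in H /\ (forall x y, x \in H -> y \in H -> x - y \in H).

Definition cays_adj (A : finZmodType) (T : {set A}) (x y : A) : bool :=
  (x != y) && (x + y \in T).

Definition perfect_code (V : finType) (adj : V -> V -> bool) (C : {set V}) : Prop :=
  forall v : V, #|[set c in C | (c == v) || adj v c]| = 1%N.

Definition subgroup_perfect_code (A : finZmodType) (H : {set A}) : Prop :=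
  is_subgroup H /\
  exists T : {set A}, square_free T /\ perfect_code (cays_adj T) H.

From HB Require Import structures.
From mathcomp Require Import all_boot all_order all_algebra.
Import GRing.Theory.
Local Open Scope ring_scope.

(* If every vertex of a perfect code C is a square and T is square-free, no
   square 2a can lie outside C: a vertex c of C adjacent to 2a would put the
   square 2a + c into T.  Conversely, when C = H is a subgroup containing all
   squares, take for T one representative of every coset of H other than H
   itself; T avoids H, hence is square-free, and every v outside H is adjacent
   to exactly one vertex of H, namely (representative of v + H) - v. *)

Definition dominators {V : finType} (adj : V -> V -> bool) (C : {set V}) (v : V) :=
  [set c in C | (c == v) || adj v c].

Section Squares.

Context {A : finZmodType}.

Definition squares : {set A} := [set a *+ 2 | a : A].

Lemma is_squareE (x : A) : is_square x = (x \in squares).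
Proof.
by apply/existsP/imsetP => [[y /eqP ->]|[y _ ->]]; exists y.
Qed.

Lemma squaresD (x y : A) : x \in squares -> y \in squares -> x + y \in squares.
Proof.
by move=> /imsetP[a _ ->] /imsetP[b _ ->]; apply/imsetP; exists (a + b); rewrite ?mulrnDl.
Qed.

Lemma squares_sub_perfect_code {T C : {set A}} :
  square_free T -> perfect_code (cays_adj T) C -> C \subset squares ->
  squares \subset C.
Proof.
move=> sfT pcC sqC; apply/subsetP => _ /imsetP[a _ ->].
have /card_gt0P[c] : (0 < #|dominators (cays_adj T) C (a *+ 2)|)%N.
  by rewrite /dominators pcC.
rewrite inE => /andP[cC /orP[/eqP <- //|/andP[_ aT]]].
have := sfT _ aT; rewrite is_squareE squaresD //; first by apply/imsetP; exists a.
exact: (subsetP sqC).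
Qed.

End Squares.

Section CosetTransversal.

Context {A : finZmodType} (H : {set A}).
Hypothesis subH : is_subgroup H.

Lemma subgroup0 : 0 \in H.
Proof. by case: subH. Qed.

Lemma subgroupB (x y : A) : x \in H -> y \in H -> x - y \in H.
Proof. by case: subH => _; apply. Qed.

Lemma subgroupN (x : A) : x \in H -> - x \in H.
Proof. by move=> xH; rewrite -sub0r subgroupB ?subgroup0. Qed.

Lemma subgroupD (x y : A) : x \in H -> y \in H -> x + y \in H.
Proof. by move=> xH yH; rewrite -[y]opprK subgroupB ?subgroupN. Qed.

Definition coset_rep (x : A) : A := odflt 0 [pick y | y - x \in H].

Lemma coset_rep_sub (x : A) : coset_rep x - x \in H.
Proof.
rewrite /coset_rep; case: pickP => [y //|none] /=.
by have := none x; rewrite subrr subgroup0.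
Qed.

Lemma coset_rep_eq (x x' : A) : x - x' \in H -> coset_rep x = coset_rep x'.
Proof.
move=> xx'H; rewrite /coset_rep; congr odflt; apply: eq_pick => y /=.
apply/idP/idP => yH.
  by rewrite -(subrKA x) subgroupD.
by rewrite -(subrKA x') -(opprB x x') subgroupB.
Qed.

Lemma coset_rep_id (x : A) : coset_rep (coset_rep x) = coset_rep x.
Proof. exact/coset_rep_eq/coset_rep_sub. Qed.

Lemma coset_rep_mem (x : A) : (coset_rep x \in H) = (x \in H).
Proof.
have rxH := coset_rep_sub x; apply/idP/idP => [rH|xH].
  by rewrite -(subKr (coset_rep x) x) subgroupB.
by rewrite -(subrK x (coset_rep x)) subgroupD.
Qed.

Definition outer_transversal : {set A} :=
  [set x | (x \notin H) && (coset_rep x == x)].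

Lemma square_free_outer_transversal :
  squares \subset H -> square_free outer_transversal.
Proof.
move=> sqH x; rewrite inE is_squareE => /andP[xH _].
by apply: contra xH; apply/subsetP.
Qed.

Lemma dominators_in (v : A) : v \in H ->
  dominators (cays_adj outer_transversal) H v = [set v].
Proof.
move=> vH; apply/setP => c; rewrite !inE /cays_adj inE.
apply/idP/eqP => [/andP[cH /orP[/eqP //|/and3P[_ /negP[]]]]|->].
  exact: subgroupD.
by rewrite vH eqxx.
Qed.

Lemma dominators_out (v : A) : v \notin H ->
  dominators (cays_adj outer_transversal) H v = [set coset_rep v - v].
Proof.
move=> vH; apply/setP => c; rewrite !inE /cays_adj inE.
apply/idP/eqP => [/andP[cH /orP[/eqP cv|/and3P[_ _ /eqP rvc]]]|->].
- by move: vH; rewrite -cv cH.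
- have -> : coset_rep v = v + c.
    by rewrite -rvc; symmetry; apply: coset_rep_eq; rewrite addrC addKr.
  by rewrite addrC addKr.
- have rvH := coset_rep_sub v.
  rewrite rvH (addrC v) subrK coset_rep_mem vH coset_rep_id eqxx /= andbT.
  by apply/orP; right; apply/eqP => vr; move: vH; rewrite vr rvH.
Qed.

Lemma perfect_code_outer_transversal :
  perfect_code (cays_adj outer_transversal) H.
Proof.
move=> v; rewrite -/(dominators _ H v).
by case: (boolP (v \in H)) => [/dominators_in|/dominators_out] ->; rewrite cards1.
Qed.

Lemma subgroup_perfect_code_of_squares :
  squares \subset H -> subgroup_perfect_code H.
Proof.
move=> sqH; split=> //; exists outer_transversal.
by split; [apply: square_free_outer_transversal | apply: perfect_code_outer_transversal].
Qed.

End CosetTransversal.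

Theorem lemma3p5 (A : finZmodType) (H : {set A}) :
  ~~ odd #|A| ->
  is_subgroup H ->
  (forall h, h \in H -> is_square h) ->
  (subgroup_perfect_code H <-> H = [set a *+ 2 | a : A]).
Proof.
move=> _ subH sqH; split=> [[_ [T [sfT pcH]]]|HE].
- have Hsq : H \subset squares by apply/subsetP => h /sqH; rewrite is_squareE.
  by apply/eqP; rewrite eqEsubset Hsq (squares_sub_perfect_code sfT pcH).
- by apply: (subgroup_perfect_code_of_squares _ subH); rewrite HE subxx.
Qed.
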